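(* Let $M_1,M_2\in\mathbb{Z}^{r\times n}$, let $\mathcal{F}$ be the set of characteristic vectors $x\in\{0,1\}^n$ of $r$-subsets of $\{1,\dots,n\}$ that are bases of both vectorial matroids represented by $M_1$ and $M_2$ (i.e., the $r\times r$ column submatrices $M_1^x$ and $M_2^x$ indexed by the support of $x$ are both nonsingular), and let $W\in\mathbb{Z}_+^{d\times n}$. For $u\in\mathbb{Z}^d_+$ define the polynomial $g_u(a):=\sum\{\det(M_1^x)\det(M_2^x)\,a^x : x\in\mathcal{F},\ Wx=u\}$ in variables $a=(a_1,\dots,a_n)$, where $a^x=\prod_j a_j^{x_j}$, and let $U:=\{Wx:x\in\mathcal{F}\}$. Suppose independent random variables uniformly distributed on $\{1,2,\dots,s\}$ are substituted for $a_1,\dots,a_n$, and let $\widehat U:=\{u\in U: g_u(a)\ne0\}$. Then for every $u\in U$, the probability that $u\notin\widehat U$ is at most $r/s$.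
   Context: $\widehat U$ equals the support (set of exponent vectors with nonzero coefficient) of the polynomial $\det(M_1(\gamma)M_2^{\top})=\sum_{u\in U}g_u(a)b^u$ in variables $b=(b_1,\dots,b_d)$, where $M_1(\gamma)$ is the matrix whose $j$-th column is the $j$-th column of $M_1$ multiplied by $\gamma_j=a_j\prod_{i=1}^d b_i^{W_{i,j}}$. *)

From HB Require Import structures.
From mathcomp Require Import all_boot all_order all_algebra.
Set Implicit Arguments. Unset Strict Implicit. Unset Printing Implicit Defensive.
Import Order.TTheory GRing.Theory Num.Theory.
Local Open Scope ring_scope.

(* An r-subset S of {1..n} is encoded as S : {set 'I_n}; its characteristic
   vector is charvec S. *)
Definition charvec (n : nat) (S : {set 'I_n}) : 'cV[int]_n :=
  \col_j (j \in S)%:R.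

(* Column submatrix M^S of M : 'M_(r,n), columns indexed by the elements of S
   in increasing order (enum S follows the increasing order of 'I_n).  It is
   an r x r matrix; when #|S| = r it is exactly M^x.  (Columns beyond #|S|
   are padded with zeros, which is irrelevant as only #|S| = r is used.) *)
Definition colsubset (r n : nat) (M : 'M[int]_(r, n)) (S : {set 'I_n})
  : 'M[int]_r :=
  \matrix_(i < r, j < r)
     oapp (fun k : 'I_#|S| => M i (enum_val k)) 0 (insub (val j)).

Definition common_basis (r n : nat) (M1 M2 : 'M[int]_(r, n)) (S : {set 'I_n})
  : bool :=
  [&& #|S| == r, \det (colsubset M1 S) != 0 & \det (colsubset M2 S) != 0].

Definition Uset (r n d : nat) (M1 M2 : 'M[int]_(r, n)) (W : 'M[int]_(d, n))
  (u : 'cV[int]_d) : Prop :=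
  exists S : {set 'I_n}, common_basis M1 M2 S /\ W *m charvec S = u.

Definition g_u (r n d : nat) (M1 M2 : 'M[int]_(r, n)) (W : 'M[int]_(d, n))
  (u : 'cV[int]_d) (a : 'I_n -> int) : int :=
  \sum_(S : {set 'I_n} | common_basis M1 M2 S && (W *m charvec S == u))
     \det (colsubset M1 S) * \det (colsubset M2 S) * \prod_(j in S) a j.

(* Probability, when a_1..a_n are independent uniform on {1..s}, that
   g_u(a) = 0: the sample space is {ffun 'I_n -> 'I_s} (a_j = val (t j) + 1),
   uniform. *)
Definition prob_not_in_Uhat (r n d s : nat) (M1 M2 : 'M[int]_(r, n))
  (W : 'M[int]_(d, n)) (u : 'cV[int]_d) : rat :=
  (#|[set t : {ffun 'I_n -> 'I_s} |
       g_u M1 M2 W u (fun j => ((val (t j)).+1)%:Z) == 0]|%:R)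
  / ((s ^ n)%N%:R).

From HB Require Import structures.
From mathcomp Require Import all_boot all_order all_algebra.
Set Implicit Arguments. Unset Strict Implicit. Unset Printing Implicit Defensive.
Import Order.TTheory GRing.Theory Num.Theory.
Local Open Scope ring_scope.

(* g_u is a multilinear polynomial of degree at most r in a, nonzero because
   u lies in U, so the bound is the Schwartz-Zippel lemma for multilinear
   polynomials.  It is proved by induction on the degree k: writing the
   polynomial as a_j * Q + P with Q, P free of a_j and Q nonzero of degree
   k - 1, for every value of the other variables either Q vanishes (a fraction
   at most (k - 1)/s of the points, by induction) or at most one of the s
   values of a_j is a root. *)

Section MultilinearSchwartzZippel.
Variables (R : idomainType) (n s : nat) (a : 'I_s -> R).
Hypothesis a_inj : injective a.
Hypothesis s_gt0 : (0 < s)%N.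
Local Notation T := {ffun 'I_n -> 'I_s}.

(* A multilinear polynomial in x_1..x_n is given by its coefficients
   c : {set 'I_n} -> R and is evaluated at the point (a (t i))_i. *)
Definition mleval (c : {set 'I_n} -> R) (t : T) : R :=
  \sum_(S : {set 'I_n}) c S * \prod_(i in S) a (t i).

Definition zero_count (c : {set 'I_n} -> R) : nat :=
  (\sum_(t : T) (mleval c t == 0%R))%N.

Definition fupd (t : T) (j : 'I_n) (v : 'I_s) : T :=
  [ffun i => if i == j then v else t i].

(* c = x_j * cdiff c j + cfree c j, both parts being free of x_j. *)
Definition cdiff (c : {set 'I_n} -> R) (j : 'I_n) (S : {set 'I_n}) : R :=
  if j \in S then 0 else c (j |: S).

Definition cfree (c : {set 'I_n} -> R) (j : 'I_n) (S : {set 'I_n}) : R :=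
  if j \in S then 0 else c S.

Lemma sum_fiber (j : 'I_n) (v0 : 'I_s) (F : T -> nat) :
  (\sum_t F t = \sum_(t : T | t j == v0) \sum_v F (fupd t j v))%N.
Proof.
rewrite (partition_big (fun t => fupd t j v0) (fun t => t j == v0)) /=; last first.
  by move=> t _; rewrite ffunE eqxx.
apply: eq_bigr => t0 /eqP t0j.
rewrite (reindex_onto (fun v => fupd t0 j v) (fun t => t j)) /=; last first.
  move=> t /eqP <-; apply/ffunP => i; rewrite !ffunE.
  by case: eqP => [->|]; rewrite ?eqxx.
apply: eq_bigl => v; rewrite ffunE eqxx eqxx andbT.
apply/eqP/ffunP => i; rewrite !ffunE.
by case: eqP => [->|]; rewrite ?t0j.
Qed.

Lemma card_fiber (j : 'I_n) (v0 : 'I_s) :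
  ((\sum_(t : T | t j == v0) 1) * s = s ^ n)%N.
Proof.
have -> : (s ^ n = \sum_(t : T) 1)%N by rewrite sum1_card card_ffun !card_ord.
rewrite (sum_fiber j v0) big_distrl /=; apply: eq_bigr => t _.
by rewrite sum_nat_const card_ord mul1n muln1.
Qed.

Lemma mleval_fupd (c : {set 'I_n} -> R) (j : 'I_n) (t : T) (v : 'I_s) :
  (forall S : {set 'I_n}, c S != 0 -> j \notin S) ->
  mleval c (fupd t j v) = mleval c t.
Proof.
move=> c_free; apply: eq_bigr => S _.
have [->|/c_free jNS] := eqVneq (c S) 0; first by rewrite !mul0r.
congr (_ * _); apply: eq_bigr => i iS; rewrite ffunE.
by case: eqP => // eij; rewrite -eij iS in jNS.
Qed.

Lemma cdiff_free (c : {set 'I_n} -> R) (j : 'I_n) (S : {set 'I_n}) :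
  cdiff c j S != 0 -> j \notin S.
Proof. by rewrite /cdiff; case: ifP; rewrite ?eqxx. Qed.

Lemma cfree_free (c : {set 'I_n} -> R) (j : 'I_n) (S : {set 'I_n}) :
  cfree c j S != 0 -> j \notin S.
Proof. by rewrite /cfree; case: ifP; rewrite ?eqxx. Qed.

Lemma mleval_split (c : {set 'I_n} -> R) (j : 'I_n) (t : T) :
  mleval c t = a (t j) * mleval (cdiff c j) t + mleval (cfree c j) t.
Proof.
rewrite /mleval (bigID (fun S : {set 'I_n} => j \in S)) /=; congr (_ + _); last first.
  rewrite [RHS](bigID (fun S : {set 'I_n} => j \in S)) /= [in RHS]big1 ?add0r; last first.
    by move=> S jS; rewrite /cfree jS mul0r.
  by apply: eq_bigr => S jNS; rewrite /cfree (negbTE jNS).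
rewrite (reindex_onto (fun S : {set 'I_n} => j |: S) (fun S => S :\ j)) /=;
  last by move=> S; apply: setD1K.
rewrite big_distrr [RHS](bigID (fun S : {set 'I_n} => j \in S)) /=.
rewrite [in RHS]big1 ?add0r; last first.
  by move=> S jS; rewrite /cdiff jS mul0r mulr0.
have jU_S (S : {set 'I_n}) : (j \in j |: S) && ((j |: S) :\ j == S) = (j \notin S).
  rewrite setU11 /=; case jS: (j \in S) => /=.
    by apply/negbTE/eqP => eS; move: (setD11 j (j |: S)); rewrite eS jS.
  by rewrite setU1K ?jS ?eqxx.
rewrite (eq_bigl _ _ jU_S); apply: eq_bigr => S jNS.
by rewrite /cdiff (negbTE jNS) big_setU1 //= mulrCA mulrA.
Qed.

Lemma roots_affine_le1 (q r : R) : q != 0 ->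
  (\sum_(v : 'I_s) (a v * q + r == 0)%R <= 1)%N.
Proof.
move=> q_neq0.
have -> : (\sum_(v : 'I_s) (a v * q + r == 0)%R = #|[pred v | (a v * q + r == 0)%R]|)%N.
  by rewrite -sum1_card [RHS]big_mkcond; apply: eq_bigr => v _; rewrite inE; case: eqP.
apply/card_le1_eqP => x y; rewrite !inE => /eqP hx /eqP hy.
by apply: a_inj; apply: (mulIf q_neq0); apply: (addIr r); rewrite hx hy.
Qed.

Lemma zero_count_const (c : {set 'I_n} -> R) :
  (forall S : {set 'I_n}, c S != 0 -> S = set0) ->
  (exists S : {set 'I_n}, c S != 0) -> zero_count c = 0%N.
Proof.
move=> c_const [S0 cS0_neq0]; rewrite /zero_count big1 // => t _.
have c0_neq0 : c set0 != 0 by rewrite -(c_const _ cS0_neq0).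
suff -> : mleval c t = c set0 by rewrite (negbTE c0_neq0).
rewrite /mleval (bigD1 set0) //= big_set0 mulr1 big1 ?addr0 // => S S_neq0.
have [->|/c_const S_eq0] := eqVneq (c S) 0; first by rewrite mul0r.
by rewrite S_eq0 eqxx in S_neq0.
Qed.

Lemma zero_count_cdiff_le (c : {set 'I_n} -> R) (j : 'I_n) (v0 : 'I_s) :
  (zero_count c <= zero_count (cdiff c j) + \sum_(t : T | t j == v0) 1)%N.
Proof.
have mleval_fupd_cdiff t v := @mleval_fupd (cdiff c j) j t v (@cdiff_free c j).
have mleval_fupd_cfree t v := @mleval_fupd (cfree c j) j t v (@cfree_free c j).
rewrite /zero_count !(sum_fiber j v0) -big_split /=; apply: leq_sum => t _.
under eq_bigr do
  rewrite (mleval_split _ j) mleval_fupd_cdiff mleval_fupd_cfree ffunE (eqxx j).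
under [X in (_ <= X + _)%N]eq_bigr do rewrite mleval_fupd_cdiff.
have [->|q_neq0] := eqVneq (mleval (cdiff c j) t) 0.
  by apply: leq_trans (leq_addr 1 _); apply: leq_sum => v _; apply: leq_b1.
by rewrite [X in (_ <= X + _)%N]big1 ?roots_affine_le1 // => v _;
  rewrite (negbTE q_neq0).
Qed.

Lemma zero_count_le (k : nat) (c : {set 'I_n} -> R) :
  (forall S : {set 'I_n}, c S != 0 -> (#|S| <= k)%N) ->
  (exists S : {set 'I_n}, c S != 0) ->
  (zero_count c * s <= k * s ^ n)%N.
Proof.
elim: k c => [|k IHk] c c_deg c_neq0.
  by rewrite zero_count_const // => S /c_deg; rewrite leqn0 cards_eq0 => /eqP.
have [/existsP[S1 /andP[cS1_neq0 /set0Pn[j jS1]]]|c_const] :=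
  boolP [exists S : {set 'I_n}, (c S != 0) && (S != set0)]; last first.
  rewrite zero_count_const // => S cS_neq0; apply/eqP.
  by move: c_const; rewrite negb_exists => /forallP/(_ S); rewrite cS_neq0 negbK.
pose v0 : 'I_s := Ordinal s_gt0.
have cdiff_deg S : cdiff c j S != 0 -> (#|S| <= k)%N.
  move=> cdS_neq0; have jNS := cdiff_free cdS_neq0.
  move: cdS_neq0; rewrite /cdiff (negbTE jNS) => /c_deg.
  by rewrite cardsU1 jNS.
have cdiff_neq0 : cdiff c j (S1 :\ j) != 0 by rewrite /cdiff setD11 setD1K.
have IH := IHk _ cdiff_deg (ex_intro _ (S1 :\ j) cdiff_neq0).
apply: (@leq_trans ((zero_count (cdiff c j) + \sum_(t : T | t j == v0) 1) * s)).
  by rewrite leq_mul2r zero_count_cdiff_le orbT.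
by rewrite mulnDl card_fiber mulSnr leq_add2r.
Qed.

End MultilinearSchwartzZippel.

Section Proposition2.
Variables (r n d : nat) (M1 M2 : 'M[int]_(r, n)) (W : 'M[int]_(d, n)).
Variable u : 'cV[int]_d.

Definition g_u_coef (S : {set 'I_n}) : int :=
  if common_basis M1 M2 S && (W *m charvec S == u)
  then \det (colsubset M1 S) * \det (colsubset M2 S) else 0.

Lemma g_u_mleval (s : nat) (t : {ffun 'I_n -> 'I_s}) :
  g_u M1 M2 W u (fun j => (val (t j)).+1%:Z) =
  mleval (fun v : 'I_s => (val v).+1%:Z) g_u_coef t.
Proof.
rewrite /g_u /mleval big_mkcond; apply: eq_bigr => S _; rewrite /g_u_coef.
by case: ifP; rewrite ?mul0r.
Qed.

Lemma g_u_coef_deg (S : {set 'I_n}) : g_u_coef S != 0 -> (#|S| <= r)%N.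
Proof. by rewrite /g_u_coef; case: ifP => // /andP[/and3P[/eqP -> _ _] _]. Qed.

Lemma g_u_coef_neq0 : Uset M1 M2 W u -> exists S, g_u_coef S != 0.
Proof.
case=> S [S_basis WS_u]; exists S; rewrite /g_u_coef S_basis WS_u eqxx /=.
by case/and3P: S_basis => _ det1_neq0 det2_neq0; rewrite mulf_neq0.
Qed.

End Proposition2.

Theorem proposition2 (r n d s : nat) (M1 M2 : 'M[int]_(r, n))
  (W : 'M[int]_(d, n)) (hW : forall i j, 0 <= W i j) (hs : (0 < s)%N)
  (u : 'cV[int]_d) (hu : Uset M1 M2 W u) :
  prob_not_in_Uhat s M1 M2 W u <= (r%:R / s%:R : rat).
Proof.
pose a (v : 'I_s) := (val v).+1%:Z.
have a_inj : injective a by move=> v w [/val_inj].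
have count_zeros : #|[set t : {ffun 'I_n -> 'I_s} |
    g_u M1 M2 W u (fun j => (val (t j)).+1%:Z) == 0]| = zero_count a (g_u_coef M1 M2 W u).
  rewrite -sum1_card big_mkcond; apply: eq_bigr => t _.
  by rewrite inE g_u_mleval; case: eqP.
have := zero_count_le a_inj hs (@g_u_coef_deg _ _ _ M1 M2 W u) (g_u_coef_neq0 hu).
rewrite /prob_not_in_Uhat count_zeros -(ler_nat rat) !natrM => bound.
have sn_gt0 : (0 < s ^ n)%N by rewrite expn_gt0 hs.
by rewrite ler_pdivrMr ?ltr0n // mulrAC ler_pdivlMr ?ltr0n.
Qed.
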